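(* Let $f(z)=z+\sum_{k=2}^{\infty}a_kz^k$ be analytic in $\mathbb{D}=\{z\in\mathbb{C}:|z|<1\}$ and suppose $zf'(z)-f(z)=\frac12 z^2\phi(z)$ for all $z\in\mathbb{D}$, where $\phi$ is analytic in $\mathbb{D}$ with $|\phi(z)|\le 1$. For $n\ge 2$ let $\rho_n(z;f)=\sum_{k=n+1}^{\infty}a_kz^k$. Then for $n\ge 2$ and $|z|=r<1$, \[|\rho_n(z;f)|\le -\frac{r}{2}\ln(1-r)-\frac{r^2}{2},\qquad |\rho_n'(z;f)|\le \frac{2r^2-r}{2(1-r)}-\frac{\ln(1-r)}{2},\qquad |z\rho_n''(z;f)|\le \frac{r^2(3-2r)}{2(1-r)^2}.\]
   Context: $\ln$ denotes the natural logarithm. *)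

From Stdlib Require Import Reals.
From Coquelicot Require Import Coquelicot.

(* Coefficient sequence of f(z) = z + sum_{k>=2} a_k z^k :
   coefficient 0 is 0, coefficient 1 is 1, coefficient k >= 2 is a k. *)
Definition f_coef (a : nat -> C) (k : nat) : C :=
  match k with
  | O => RtoC 0
  | S O => RtoC 1
  | _ => a k
  end.

Definition tail_coef (a : nat -> C) (n k : nat) : C :=
  if Nat.ltb n k then a k else RtoC 0.

Definition in_disk (z : C) : Prop := (Cmod z < 1)%R.

Definition holo_disk (g : C -> C) : Prop :=
  forall z : C, in_disk z -> @ex_derive C_AbsRing C_NormedModule g z.

From Stdlib Require Import Reals Lra Lia.
From Coquelicot Require Import Coquelicot.
Open Scope R_scope.

(* With f = sum a_k z^k, the hypothesis says that z f' - f = sum (k - 1) a_k z^k is bounded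
   by 1/2 on the disk, so Cauchy's estimate gives |a_k| <= 1/(2(k - 1)).  For n >= 2 the
   three quantities are then dominated termwise by the power series in r with these
   coefficients (differentiated once or twice), whose sums are (r/2)(-ln(1-r) - r),
   r^2/(2(1-r)) + (1/2)(-ln(1-r) - r) and (1/2)((1-r)^-2 - 1 - 2r).

   Term-by-term differentiation of a complex power series is obtained by comparing its
   remainder with that of the real majorant sum |c_k| x^k.  Cauchy's estimate is obtained by
   averaging over the N-th roots of unity w: (1/N) sum_m w^(-jm) psi(r w^m) is the sum of
   the d_l r^l with l = j (mod N), so |d_j| r^j <= M + sum_(l >= N) |d_l| r^l; let N go to
   infinity, then r go to 1. *)

(* Coquelicot's [plus], [scal], [mult], [pow_n] on [C] and [R] are convertible to the
   concrete operations, but [ring] only recognizes the latter. *)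
Ltac C_ring :=
  match goal with |- ?a = ?b => change (@eq C a b) end;
  unfold minus, plus, opp, scal, zero, one; simpl;
  repeat change (mult ?a ?b) with (Cmult a b);
  repeat change (pow_n ?a ?b) with (Cpow a b); ring.

Ltac R_ring :=
  match goal with |- ?a = ?b => change (@eq R a b) end;
  unfold minus, plus, opp, scal, zero, one; simpl;
  repeat change (mult ?a ?b) with (Rmult a b);
  repeat change (pow_n ?a ?b) with (pow a b); ring.

Lemma is_series_sum_n {K : AbsRing} {V : NormedModule K}
  (F : nat -> nat -> V) (L : nat -> V) (n : nat) :
  (forall m, is_series (F m) (L m)) ->
  is_series (fun l => sum_n (fun m => F m l) n) (sum_n L n).
Proof.
  intros H. induction n as [|n IH].
  - rewrite sum_O. eapply is_series_ext; [|apply (H O)]. intros l. now rewrite sum_O.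
  - rewrite sum_Sn. eapply is_series_ext; [|apply (is_series_plus _ _ _ _ IH (H (S n)))].
    intros l. now rewrite sum_Sn.
Qed.

Lemma is_series_tail {K : AbsRing} {V : NormedModule K} (a : nat -> V) (l : V) (n : nat) :
  is_series a l -> is_series (fun k => a (S n + k)%nat) (minus l (sum_n a n)).
Proof.
  intros H. apply is_series_incr_n; [lia|]. simpl pred.
  assert (E : forall s : V, plus (minus l s) s = l).
  { intros s. unfold minus. now rewrite <- plus_assoc, plus_opp_l, plus_zero_r. }
  now rewrite E.
Qed.

Lemma sum_n_single {G : AbelianMonoid} (a : nat -> G) (n j : nat) :
  (j <= n)%nat -> (forall l, (l <= n)%nat -> l <> j -> a l = zero) -> sum_n a n = a j.
Proof.
  induction n as [|n IH]; intros Hj Ha.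
  - replace j with O by lia. apply sum_O.
  - rewrite sum_Sn. destruct (Nat.eq_dec j (S n)) as [->|Hjn].
    + rewrite (sum_n_ext_loc a (fun _ => zero)) by (intros l Hl; apply Ha; lia).
      unfold sum_n. now rewrite sum_n_m_const_zero, plus_zero_l.
    + rewrite IH, (Ha (S n)) by (lia || (intros l Hl Hlj; apply Ha; lia)).
      apply plus_zero_r.
Qed.

Lemma sum_n_le_add_nonneg (b : nat -> R) (N m : nat) :
  (forall k, 0 <= b k) -> sum_n b N <= sum_n b (m + N).
Proof.
  intros H. induction m as [|m IH]; simpl; [lra|].
  rewrite sum_Sn. change (sum_n b N <= sum_n b (m + N) + b (S (m + N))).
  specialize (H (S (m + N))). lra.
Qed.

Lemma Cmod_sum_n_le (e : nat -> C) (b : nat -> R) (N : nat) :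
  (forall k, Cmod (e k) <= b k) -> Cmod (sum_n e N) <= sum_n b N.
Proof.
  intros H. eapply Rle_trans; [apply (norm_sum_n_m e 0 N)|]. now apply sum_n_m_le.
Qed.

Lemma is_lim_seq_Cmod_sum_n (e : nat -> C) (E : C) :
  is_series e E -> is_lim_seq (fun N => Cmod (sum_n e N)) (Cmod E).
Proof.
  intros HE.
  change (filterlim (fun N => norm (sum_n e N)) eventually (locally (norm E))).
  apply (filterlim_comp _ _ _ (sum_n e) norm eventually (locally E)); [exact HE|].
  apply (@filterlim_norm C_AbsRing C_NormedModule).
Qed.

Lemma Cmod_is_series_le (e : nat -> C) (b : nat -> R) (E : C) (B : R) :
  is_series e E -> is_series b B -> (forall k, Cmod (e k) <= b k) -> Cmod E <= B.
Proof.
  intros HE HB H.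
  assert (HB' : is_lim_seq (sum_n b) B) by exact HB.
  exact (is_lim_seq_le _ _ _ _ (fun N => Cmod_sum_n_le e b N H) (is_lim_seq_Cmod_sum_n e E HE) HB').
Qed.

Lemma Cmod_is_series_le_sum_n (e : nat -> C) (b : nat -> R) (E : C) (K : R) :
  is_series e E -> (forall k, Cmod (e k) <= b k) -> (forall N, sum_n b N <= K) ->
  Cmod E <= K.
Proof.
  intros HE Hb HK.
  refine (is_lim_seq_le _ _ _ _ _ (is_lim_seq_Cmod_sum_n e E HE) (is_lim_seq_const K)).
  intros N. eapply Rle_trans; [apply (Cmod_sum_n_le e b N Hb)|apply HK].
Qed.

Lemma is_pseries_C (c : nat -> C) (z l : C) :
  is_pseries c z l <-> is_series (fun k => (z ^ k * c k)%C) l.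
Proof.
  split; intros H; exact H.
Qed.

Lemma Cmod_pseries_terms_bounded (c : nat -> C) (w : C) :
  ex_pseries c w -> exists M, forall k, Cmod (c k) * Cmod w ^ k <= M.
Proof.
  intros [l Hl].
  set (e := fun k => (w ^ k * c k)%C).
  destruct (filterlim_bounded (sum_n e) (ex_intro _ l Hl)) as [M HM].
  change (forall N, Cmod (sum_n e N) <= M) in HM.
  assert (HM0 : 0 <= M) by (eapply Rle_trans; [apply Cmod_ge_0|apply (HM O)]).
  exists (2 * M); intros k.
  replace (Cmod (c k) * Cmod w ^ k) with (Cmod (e k))
    by (unfold e; rewrite Cmod_mult, Cmod_pow; ring).
  destruct k as [|k].
  - specialize (HM O). rewrite sum_O in HM. lra.
  - replace (e (S k)) with (sum_n e (S k) + - sum_n e k)%C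
      by (rewrite sum_Sn; change (plus ?x ?y) with (x + y)%C; ring).
    pose proof (Cmod_triangle (sum_n e (S k)) (- sum_n e k)%C) as Htri.
    rewrite Cmod_opp in Htri. pose proof (HM (S k)). pose proof (HM k). lra.
Qed.

Lemma Cmod_pseries_le (c : nat -> C) (b : nat -> R) (z L : C) (K : R) :
  is_pseries c z L -> (forall k, Cmod (c k) <= b k) ->
  (forall N, sum_n (fun k => b k * Cmod z ^ k) N <= K) -> Cmod L <= K.
Proof.
  intros HL Hb HK. apply is_pseries_C in HL.
  apply (Cmod_is_series_le_sum_n _ (fun k => b k * Cmod z ^ k) _ _ HL); [|exact HK]. intros k.
  rewrite Cmod_mult, Cmod_pow, Rmult_comm.
  apply Rmult_le_compat_r; [apply pow_le, Cmod_ge_0|apply Hb].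
Qed.

Lemma Cmod_mul_pseries_le (c : nat -> C) (b : nat -> R) (z L : C) (K : R) :
  is_pseries c z L -> (forall k, Cmod (c k) <= b k) ->
  (forall N, sum_n (fun k => Cmod z * (b k * Cmod z ^ k)) N <= K) -> Cmod (z * L)%C <= K.
Proof.
  intros HL Hb HK. apply is_pseries_C, (is_series_scal z) in HL.
  apply (Cmod_is_series_le_sum_n _ (fun k => Cmod z * (b k * Cmod z ^ k)) _ _ HL); [|exact HK].
  intros k. change (Cmod (z * (z ^ k * c k))%C <= Cmod z * (b k * Cmod z ^ k)).
  rewrite !Cmod_mult, Cmod_pow, (Rmult_comm (Cmod z ^ k)).
  apply Rmult_le_compat_l; [apply Cmod_ge_0|].
  apply Rmult_le_compat_r; [apply pow_le, Cmod_ge_0|apply Hb].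
Qed.

Definition abs_coef (c : nat -> C) (k : nat) : R := Cmod (c k).

Definition PS_derive_C (c : nat -> C) (k : nat) : C := (INR (S k) * c (S k))%C.

Lemma abs_coef_PS_derive_C (c : nat -> C) (k : nat) :
  abs_coef (PS_derive_C c) k = PS_derive (abs_coef c) k.
Proof.
  unfold abs_coef, PS_derive_C, PS_derive.
  now rewrite Cmod_mult, Cmod_R, Rabs_pos_eq by apply pos_INR.
Qed.

Lemma Cmod_PS_derive_C_le (c : nat -> C) (b : nat -> R) :
  (forall k, Cmod (c k) <= b k) -> forall k, Cmod (PS_derive_C c k) <= PS_derive b k.
Proof.
  intros H k. change (abs_coef (PS_derive_C c) k <= PS_derive b k).
  rewrite abs_coef_PS_derive_C. apply Rmult_le_compat_l; [apply pos_INR|apply H].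
Qed.

Lemma is_series_PS_derive_C (c : nat -> C) (z l : C) :
  is_pseries (PS_derive_C c) z l -> is_series (fun k => (INR k * c k * z ^ pred k)%C) l.
Proof.
  intros Hl. apply is_series_decr_1.
  match goal with |- is_series _ ?l' => replace l' with l by C_ring end.
  eapply is_series_ext; [|exact Hl]. intros k. unfold PS_derive_C. C_ring.
Qed.

Lemma is_series_PS_derive (a : nat -> R) (x l : R) :
  is_pseries (PS_derive a) x l -> is_series (fun k => INR k * a k * x ^ pred k) l.
Proof.
  intros Hl. apply is_series_decr_1.
  match goal with |- is_series _ ?l' => replace l' with l by R_ring end.
  eapply is_series_ext; [|exact Hl]. intros k. unfold PS_derive. R_ring.
Qed.

Lemma Cpow_remainder_le (z h : C) (k : nat) :
  Cmod ((z + h) ^ k - z ^ k - h * INR k * z ^ pred k)%C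
  <= (Cmod z + Cmod h) ^ k - Cmod z ^ k - Cmod h * INR k * Cmod z ^ pred k.
Proof.
  set (A := Cmod z); set (T := Cmod h).
  assert (HA : 0 <= A) by apply Cmod_ge_0.
  assert (HT : 0 <= T) by apply Cmod_ge_0.
  destruct k as [|k].
  { simpl. replace (1 - 1 - h * 0 * 1)%C with (RtoC 0) by ring. rewrite Cmod_0. lra. }
  induction k as [|k IH].
  { simpl. replace ((z + h) * 1 - z * 1 - h * 1 * 1)%C with (RtoC 0) by ring. rewrite Cmod_0. lra. }
  assert (Hrec : ((z + h) ^ S (S k) - z ^ S (S k) - h * INR (S (S k)) * z ^ pred (S (S k)))%C
    = ((z + h) * ((z + h) ^ S k - z ^ S k - h * INR (S k) * z ^ pred (S k))
       + INR (S k) * (h * h) * z ^ k)%C).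
  { simpl pred. rewrite (S_INR (S k)), RtoC_plus. simpl Cpow. ring. }
  assert (Hrec_R : (A + T) ^ S (S k) - A ^ S (S k) - T * INR (S (S k)) * A ^ pred (S (S k))
    = (A + T) * ((A + T) ^ S k - A ^ S k - T * INR (S k) * A ^ pred (S k))
       + INR (S k) * (T * T) * A ^ k).
  { simpl pred. rewrite (S_INR (S k)). simpl pow. ring. }
  rewrite Hrec, Hrec_R.
  eapply Rle_trans; [apply Cmod_triangle|].
  rewrite !Cmod_mult, Cmod_R, Rabs_pos_eq, Cmod_pow by apply pos_INR. fold A T.
  apply Rplus_le_compat; [|right; reflexivity].
  apply Rmult_le_compat; [apply Cmod_ge_0 | apply Cmod_ge_0 | apply Cmod_triangle | exact IH].
Qed.

Section ComplexPowerSeries.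

Variables (c : nat -> C) (g : C -> C).
Hypothesis Hg : forall w, Cmod w < 1 -> is_pseries c w (g w).

Lemma CV_radius_abs_coef_gt (x : R) :
  Rabs x < 1 -> Rbar_lt (Rabs x) (CV_radius (abs_coef c)).
Proof.
  intros Hx.
  set (s := (Rabs x + 1) / 2).
  assert (Hs0 : 0 <= s) by (unfold s; pose proof (Rabs_pos x); lra).
  assert (Hs : Cmod (RtoC s) = s) by (rewrite Cmod_R; now apply Rabs_pos_eq).
  destruct (Cmod_pseries_terms_bounded c (RtoC s)) as [M HM].
  { exists (g (RtoC s)). apply Hg. rewrite Hs. unfold s; lra. }
  assert (Hle : Rbar_le s (CV_radius (abs_coef c))).
  { apply (proj1 (CV_radius_bounded (abs_coef c))). exists M. intros k.
    rewrite Rabs_mult, !Rabs_pos_eq, <- Hs.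
    - apply HM.
    - now apply pow_le.
    - apply Cmod_ge_0. }
  destruct (CV_radius (abs_coef c)) as [r| |]; simpl in *; try tauto.
  unfold s in Hle; lra.
Qed.

Lemma is_pseries_abs_coef (x : R) :
  Rabs x < 1 -> is_pseries (abs_coef c) x (PSeries (abs_coef c) x).
Proof. intros Hx. now apply PSeries_correct, CV_radius_inside, CV_radius_abs_coef_gt. Qed.

Lemma ex_pseries_PS_derive_C (w : C) :
  Cmod w < 1 -> ex_pseries (PS_derive_C c) w.
Proof.
  intros Hw.
  assert (Hr : Rbar_lt (Rabs (Cmod w)) (CV_radius (PS_derive (abs_coef c)))).
  { rewrite CV_radius_derive. apply CV_radius_abs_coef_gt.
    now rewrite Rabs_pos_eq by apply Cmod_ge_0. }
  destruct (CV_radius_inside _ _ Hr) as [l Hl].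
  apply (@ex_series_le C_AbsRing C_CompleteNormedModule _
           (fun k => scal (pow_n (Cmod w) k) (PS_derive (abs_coef c) k))).
  - intros k. change (Cmod (w ^ k * PS_derive_C c k)%C <= Cmod w ^ k * PS_derive (abs_coef c) k).
    now rewrite Cmod_mult, Cmod_pow, <- abs_coef_PS_derive_C.
  - now exists l.
Qed.

Lemma pseries_remainder_le (z h l : C) :
  Cmod z + Cmod h < 1 -> is_pseries (PS_derive_C c) z l ->
  Cmod (g (z + h) - g z - h * l)%C <=
  PSeries (abs_coef c) (Cmod z + Cmod h) - PSeries (abs_coef c) (Cmod z)
  - Cmod h * PSeries (PS_derive (abs_coef c)) (Cmod z).
Proof.
  intros Hzh Hl.
  set (A := Cmod z) in *; set (T := Cmod h) in *.
  assert (HA : 0 <= A) by apply Cmod_ge_0.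
  assert (HT : 0 <= T) by apply Cmod_ge_0.
  assert (Hz_lt : Cmod z < 1) by (fold A; lra).
  assert (Hzh_lt : Cmod (z + h) < 1) by (eapply Rle_lt_trans; [apply Cmod_triangle|exact Hzh]).
  assert (HC : is_series (fun k => (c k * ((z + h) ^ k - z ^ k - h * INR k * z ^ pred k))%C)
                         (g (z + h) - g z - h * l)%C).
  { pose proof (is_series_minus _ _ _ _ (is_series_minus _ _ _ _ (Hg _ Hzh_lt) (Hg _ Hz_lt))
                  (is_series_scal h _ _ (is_series_PS_derive_C c z l Hl))) as H.
    eapply is_series_ext; [|exact H]. intros k. C_ring. }
  assert (HR : is_series (fun k => abs_coef c k * ((A + T) ^ k - A ^ k - T * INR k * A ^ pred k))
      (PSeries (abs_coef c) (A + T) - PSeries (abs_coef c) A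
       - T * PSeries (PS_derive (abs_coef c)) A)).
  { assert (HdA : is_pseries (PS_derive (abs_coef c)) A (PSeries (PS_derive (abs_coef c)) A)).
    { apply PSeries_correct, CV_radius_inside. rewrite CV_radius_derive.
      apply CV_radius_abs_coef_gt. rewrite Rabs_pos_eq; lra. }
    pose proof (is_series_minus _ _ _ _
                  (is_series_minus _ _ _ _
                     (is_pseries_abs_coef (A + T) ltac:(rewrite Rabs_pos_eq; lra))
                     (is_pseries_abs_coef A ltac:(rewrite Rabs_pos_eq; lra)))
                  (is_series_scal T _ _ (is_series_PS_derive _ _ _ HdA))) as H.
    eapply is_series_ext; [|exact H]. intros k. R_ring. }
  apply (Cmod_is_series_le _ _ _ _ HC HR). intros k.
  rewrite Cmod_mult. apply Rmult_le_compat_l; [apply Cmod_ge_0|apply Cpow_remainder_le].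
Qed.

Lemma is_derive_pseries_C (z l : C) :
  Cmod z < 1 -> is_pseries (PS_derive_C c) z l -> is_derive g z l.
Proof.
  intros Hz Hl.
  set (A := Cmod z) in *.
  set (G := PSeries (abs_coef c)).
  set (G' := PSeries (PS_derive (abs_coef c)) A).
  assert (HG : derivable_pt_lim G A G').
  { apply is_derive_Reals, is_derive_PSeries, CV_radius_abs_coef_gt.
    now rewrite Rabs_pos_eq by apply Cmod_ge_0. }
  split; [apply is_linear_scal_l|].
  intros x Hx.
  apply (@is_filter_lim_locally_unique C_AbsRing (AbsRing_NormedModule C_AbsRing)) in Hx.
  subst x. intros eps.
  destruct (HG eps (cond_pos eps)) as [del Hdel].
  apply (@locally_norm_le_locally C_AbsRing (AbsRing_NormedModule C_AbsRing)).
  assert (Hpos : 0 < Rmin del (1 - A)) by (apply Rmin_glb_lt; [apply cond_pos | lra]).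
  exists (mkposreal _ Hpos). intros y Hy. change C in y.
  change (Cmod (y - z)%C < Rmin del (1 - A)) in Hy.
  change (Cmod (g y - g z - (y - z) * l)%C <= eps * Cmod (y - z)%C).
  assert (Hy' : y = (z + (y - z))%C) by ring.
  set (h := (y - z)%C) in *. rewrite Hy'.
  set (T := Cmod h) in *.
  assert (HT : 0 <= T) by apply Cmod_ge_0.
  assert (HTdel : T < del) by (pose proof (Rmin_l del (1 - A)); lra).
  assert (HT1 : A + T < 1) by (pose proof (Rmin_r del (1 - A)); lra).
  eapply Rle_trans; [exact (pseries_remainder_le z h l HT1 Hl)|]. fold A T G G'.
  destruct (Req_dec T 0) as [HT0|HT0].
  { rewrite HT0, Rplus_0_r. lra. }
  specialize (Hdel T HT0 ltac:(rewrite Rabs_pos_eq; lra)).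
  replace (G (A + T) - G A - T * G') with (T * ((G (A + T) - G A) / T - G')) by (field; lra).
  rewrite Rmult_comm. apply Rmult_le_compat_r; [exact HT|].
  pose proof (Rle_abs ((G (A + T) - G A) / T - G')). lra.
Qed.

Lemma is_pseries_C_derive (w : C) :
  Cmod w < 1 -> is_pseries (PS_derive_C c) w (C_derive g w).
Proof.
  intros Hw. destruct (ex_pseries_PS_derive_C w Hw) as [l Hl].
  now rewrite (is_C_derive_unique g w l (is_derive_pseries_C w l Hw Hl)).
Qed.

End ComplexPowerSeries.

Lemma is_pseries_mul_derive_sub (c : nat -> C) (g : C -> C) :
  (forall w, Cmod w < 1 -> is_pseries c w (g w)) ->
  forall w, Cmod w < 1 ->
  is_pseries (fun k => (INR k - 1) * c k)%C w (w * C_derive g w - g w)%C.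
Proof.
  intros Hg w Hw.
  pose proof (is_series_PS_derive_C c w _ (is_pseries_C_derive c g Hg w Hw)) as Hd.
  pose proof (is_series_minus _ _ _ _ (is_series_scal w _ _ Hd) (Hg w Hw)) as H.
  eapply is_series_ext; [|exact H]. intros [|k]; C_ring.
Qed.

Definition root_of_unity (N : nat) : C := (cos (2 * PI / INR N), sin (2 * PI / INR N)).

Lemma root_of_unity_pow (N m : nat) :
  (root_of_unity N ^ m)%C = (cos (2 * PI / INR N * INR m), sin (2 * PI / INR N * INR m)).
Proof.
  induction m as [|m IH].
  - simpl INR. rewrite Rmult_0_r, cos_0, sin_0. reflexivity.
  - rewrite Cpow_S, IH, S_INR, Rmult_plus_distr_l, Rmult_1_r, cos_plus, sin_plus.
    unfold root_of_unity, Cmult; simpl. f_equal; ring.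
Qed.

Lemma Cmod_root_of_unity_pow (N m : nat) : Cmod (root_of_unity N ^ m)%C = 1.
Proof.
  rewrite root_of_unity_pow. generalize (2 * PI / INR N * INR m). intros t.
  unfold Cmod; simpl. rewrite !Rmult_1_r, <- sqrt_1. f_equal.
  rewrite <- (sin2_cos2 t). unfold Rsqr. ring.
Qed.

Lemma root_of_unity_pow_mul (N q : nat) : (0 < N)%nat -> (root_of_unity N ^ (q * N))%C = 1.
Proof.
  intros HN. rewrite root_of_unity_pow.
  assert (HN' : INR N <> 0) by (apply not_0_INR; lia).
  replace (2 * PI / INR N * INR (q * N)) with (0 + 2 * INR q * PI)
    by (rewrite mult_INR; field; exact HN').
  now rewrite cos_period, sin_period, cos_0, sin_0.
Qed.

Lemma root_of_unity_pow_ne1 (N p : nat) : (0 < p < N)%nat -> (root_of_unity N ^ p)%C <> 1.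
Proof.
  intros Hp E. rewrite root_of_unity_pow in E. injection E as Ecos Esin.
  set (t := 2 * PI / INR N * INR p) in *.
  assert (HN : 0 < INR N) by (apply lt_0_INR; lia).
  assert (Hp0 : 0 < INR p) by (apply lt_0_INR; lia).
  assert (HpN : INR p < INR N) by (apply lt_INR; lia).
  pose proof PI_RGT_0.
  assert (Ht0 : 0 < t) by (unfold t; apply Rmult_lt_0_compat; [apply Rdiv_lt_0_compat|]; lra).
  assert (Ht2 : t < 2 * PI).
  { unfold t. replace (2 * PI) with (2 * PI / INR N * INR N) at 2 by (field; lra).
    apply Rmult_lt_compat_l; [apply Rdiv_lt_0_compat|]; lra. }
  destruct (Rtotal_order t PI) as [Ht|[Ht|Ht]].
  - pose proof (sin_gt_0 t Ht0 Ht). lra.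
  - rewrite Ht, cos_PI in Ecos. lra.
  - pose proof (sin_lt_0 t Ht Ht2). lra.
Qed.

Lemma sum_n_geom_C (q : C) (n : nat) :
  ((q - 1) * sum_n (fun m => q ^ m) n)%C = (q ^ S n - 1)%C.
Proof.
  induction n as [|n IH].
  - rewrite sum_O. simpl. ring.
  - rewrite sum_Sn. change (plus ?x ?y) with (x + y)%C.
    rewrite Cmult_plus_distr_l, IH, (Cpow_S q (S n)). ring.
Qed.

Lemma sum_n_pow_root_of_unity_divide (n p : nat) :
  Nat.divide (S n) p -> sum_n (fun m => (root_of_unity (S n) ^ p) ^ m)%C n = RtoC (INR (S n)).
Proof.
  intros [q ->]. rewrite root_of_unity_pow_mul by lia.
  induction n as [|n IH].
  - rewrite sum_O. reflexivity.
  - rewrite sum_Sn, IH, Cpow_1_l, (S_INR (S n)), RtoC_plus. reflexivity.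
Qed.

Lemma sum_n_pow_root_of_unity_not_divide (n p : nat) :
  ~ Nat.divide (S n) p -> sum_n (fun m => (root_of_unity (S n) ^ p) ^ m)%C n = RtoC 0.
Proof.
  intros Hp.
  set (q := (root_of_unity (S n) ^ p)%C).
  assert (Hq1 : q <> 1%C).
  { unfold q. rewrite (Nat.div_mod_eq p (S n)), Cpow_add_r, Nat.mul_comm, root_of_unity_pow_mul,
      Cmult_1_l by lia.
    apply root_of_unity_pow_ne1. split; [|apply Nat.mod_upper_bound; lia].
    destruct (Nat.eq_dec (p mod S n) 0) as [E|E]; [|lia].
    exfalso. now apply Hp, Nat.Lcm0.mod_divide. }
  assert (HqN : (q ^ S n)%C = 1).
  { unfold q. rewrite <- Cpow_mult_r. apply root_of_unity_pow_mul. lia. }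
  pose proof (sum_n_geom_C q n) as Hgeom. rewrite HqN in Hgeom.
  replace (1 - 1)%C with (RtoC 0) in Hgeom by ring.
  assert (Hq : (q - 1)%C <> 0) by (intros E; apply Hq1; rewrite <- (Cplus_0_l 1), <- E; ring).
  rewrite <- (Cmult_1_l (sum_n _ _)), <- (Cinv_l _ Hq), <- Cmult_assoc, Hgeom.
  apply Cmult_0_r.
Qed.

Lemma Cmod_sum_n_pow_root_of_unity_le (n p : nat) :
  Cmod (sum_n (fun m => (root_of_unity (S n) ^ p) ^ m)%C n) <= INR (S n).
Proof.
  eapply Rle_trans; [apply (Cmod_sum_n_le _ (fun _ => 1))|].
  - intros m. rewrite <- Cpow_mult_r, Cmod_root_of_unity_pow. lra.
  - rewrite sum_n_const. lra.
Qed.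

Lemma sum_n_root_of_unity_filter (u : nat -> C) (n j : nat) :
  (j <= n)%nat ->
  sum_n (fun l => u l * sum_n (fun m => (root_of_unity (S n) ^ (l + (S n - j))) ^ m) n)%C n
  = (u j * INR (S n))%C.
Proof.
  intros Hj. rewrite (sum_n_single _ n j Hj).
  - rewrite sum_n_pow_root_of_unity_divide; [reflexivity|]. exists 1%nat. lia.
  - intros l Hl Hlj. rewrite sum_n_pow_root_of_unity_not_divide; [C_ring|].
    intros [q Hq]. destruct q as [|[|q]]; nia.
Qed.

Lemma one_sub_mul_le_pow (r : R) (j : nat) : 0 <= r <= 1 -> 1 - INR j * (1 - r) <= r ^ j.
Proof.
  intros Hr. induction j as [|j IH]; [simpl; lra|].
  rewrite S_INR; simpl pow. pose proof (pos_INR j).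
  assert (r * (1 - INR j * (1 - r)) <= r * r ^ j) by (apply Rmult_le_compat_l; lra).
  assert (0 <= INR j * ((1 - r) * (1 - r))) by (apply Rmult_le_pos; nra).
  nra.
Qed.

Lemma le_of_forall_mul_pow_le (X M : R) (j : nat) :
  0 <= X -> (forall r, 0 <= r < 1 -> X * r ^ j <= M) -> X <= M.
Proof.
  intros HX H. apply Rle_plus_epsilon. intros eps Heps.
  set (J := X * INR j). assert (HJ : 0 <= J) by (apply Rmult_le_pos; [lra|apply pos_INR]).
  set (t := eps / (J + eps + 1)).
  assert (Ht_def : t * (J + eps + 1) = eps) by (unfold t; field; lra).
  assert (Ht : 0 < t < 1) by (split; [apply Rdiv_lt_0_compat|]; nra).
  specialize (H (1 - t) ltac:(lra)).
  pose proof (one_sub_mul_le_pow (1 - t) j ltac:(lra)) as Hb.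
  assert (HJt : J * t <= eps) by nra.
  assert (X * (1 - INR j * (1 - (1 - t))) <= X * (1 - t) ^ j) by (apply Rmult_le_compat_l; lra).
  unfold J in HJt. nra.
Qed.

Section CauchyEstimate.

Variables (d : nat -> C) (psi : C -> C) (M : R).
Hypothesis Hd : forall w, Cmod w < 1 -> is_pseries d w (psi w).
Hypothesis HM : forall w, Cmod w < 1 -> Cmod (psi w) <= M.

Lemma root_of_unity_average (n j : nat) (r : R) :
  0 <= r < 1 ->
  is_series
    (fun l => d l * r ^ l * sum_n (fun m => (root_of_unity (S n) ^ (l + (S n - j))) ^ m) n)%C
    (sum_n (fun m => root_of_unity (S n) ^ ((S n - j) * m)
                     * psi (r * root_of_unity (S n) ^ m)) n)%C.
Proof.
  intros Hr. set (w := root_of_unity (S n)).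
  eapply is_series_ext;
    [|apply (is_series_sum_n (fun m l => w ^ ((S n - j) * m) * ((r * w ^ m) ^ l * d l))%C)].
  - intros l. symmetry. rewrite <- (sum_n_mult_l (K := C_Ring)). apply sum_n_ext. intros m.
    change (mult ?x ?y) with (x * y)%C.
    rewrite Cpow_mult_l, <- !Cpow_mult_r, Nat.mul_add_distr_r, Cpow_add_r, (Nat.mul_comm m l).
    C_ring.
  - intros m. apply (is_series_scal (K := C_AbsRing) (V := C_NormedModule)), Hd.
    unfold w. rewrite Cmod_mult, Cmod_root_of_unity_pow, Cmod_R, Rabs_pos_eq; lra.
Qed.

Lemma Cmod_root_of_unity_average_le (n j : nat) (r : R) :
  0 <= r < 1 ->
  Cmod (sum_n (fun m => root_of_unity (S n) ^ ((S n - j) * m)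
                        * psi (r * root_of_unity (S n) ^ m)) n)%C
  <= INR (S n) * M.
Proof.
  intros Hr. eapply Rle_trans; [apply (Cmod_sum_n_le _ (fun _ => M))|].
  - intros m. rewrite Cmod_mult, Cmod_root_of_unity_pow, Rmult_1_l. apply HM.
    rewrite Cmod_mult, Cmod_root_of_unity_pow, Cmod_R, Rabs_pos_eq; lra.
  - rewrite sum_n_const. lra.
Qed.

Lemma Cmod_coef_pow_le_tail (n j : nat) (r : R) :
  0 <= r < 1 -> (j <= n)%nat ->
  Cmod (d j) * r ^ j <= M + (PSeries (abs_coef d) r - sum_n (fun k => r ^ k * abs_coef d k) n).
Proof.
  intros Hr Hj.
  set (N := S n).
  set (G := fun l => (sum_n (fun m => (root_of_unity N ^ (l + (N - j))) ^ m)%C n : C)).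
  set (a := fun l => (d l * r ^ l * G l)%C).
  set (A := (sum_n (fun m => root_of_unity N ^ ((N - j) * m) * psi (r * root_of_unity N ^ m))%C n
             : C)).
  set (K := PSeries (abs_coef d) r).
  set (P := (sum_n (fun k => r ^ k * abs_coef d k) n : R)).
  assert (HN : 0 < INR N) by (apply lt_0_INR; lia).
  assert (HGj : G j = RtoC (INR N)).
  { apply sum_n_pow_root_of_unity_divide. exists 1%nat. unfold N. lia. }
  assert (Hsum : sum_n a n = a j).
  { unfold a at 2. rewrite HGj.
    exact (sum_n_root_of_unity_filter (fun l => d l * r ^ l)%C n j Hj). }
  assert (Htail : is_series (fun k => a (N + k)%nat) (A - a j)%C).
  { pose proof (is_series_tail a A n (root_of_unity_average n j r Hr)) as H.
    change (is_series (fun k => a (N + k)%nat) (A - @sum_n C_AbelianMonoid a n)%C) in H.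
    now rewrite Hsum in H. }
  assert (HK_tail : is_series (fun k => r ^ (N + k) * abs_coef d (N + k)) (K - P)).
  { apply (is_series_tail (fun k => r ^ k * abs_coef d k)), (is_pseries_abs_coef d psi Hd).
    rewrite Rabs_pos_eq; lra. }
  assert (Htail_le : Cmod (A - a j)%C <= INR N * (K - P)).
  { apply (Cmod_is_series_le _ _ _ _ Htail (is_series_scal (INR N) _ _ HK_tail)). intros k.
    change (Cmod (a (N + k)%nat) <= INR N * (r ^ (N + k) * Cmod (d (N + k)%nat))).
    unfold a. rewrite !Cmod_mult, <- RtoC_pow, Cmod_R, Rabs_pos_eq by (apply pow_le; lra).
    replace (INR N * (r ^ (N + k) * Cmod (d (N + k)%nat)))
      with (Cmod (d (N + k)%nat) * r ^ (N + k) * INR N) by ring.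
    apply Rmult_le_compat_l; [|apply Cmod_sum_n_pow_root_of_unity_le].
    apply Rmult_le_pos; [apply Cmod_ge_0|apply pow_le; lra]. }
  pose proof (Cmod_root_of_unity_average_le n j r Hr) as HA_le. fold N A in HA_le.
  assert (Haj : Cmod (a j) = INR N * (Cmod (d j) * r ^ j)).
  { unfold a. rewrite HGj, !Cmod_mult, <- RtoC_pow, !Cmod_R, !Rabs_pos_eq
      by (lra || (apply pow_le; lra)).
    ring. }
  assert (Htri : Cmod (a j) <= Cmod A + Cmod (A - a j)%C).
  { replace (a j) with (A - (A - a j))%C at 1 by ring.
    eapply Rle_trans; [apply Cmod_triangle|]. now rewrite Cmod_opp. }
  apply (Rmult_le_reg_l (INR N) _ _ HN). nra.
Qed.

Lemma Cmod_coef_pow_le (j : nat) (r : R) : 0 <= r < 1 -> Cmod (d j) * r ^ j <= M.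
Proof.
  intros Hr. apply Rle_plus_epsilon. intros eps Heps.
  assert (HK : is_lim_seq (sum_n (fun k => r ^ k * abs_coef d k)) (PSeries (abs_coef d) r)).
  { apply (is_pseries_abs_coef d psi Hd). rewrite Rabs_pos_eq; lra. }
  apply is_lim_seq_spec in HK. destruct (HK (mkposreal eps Heps)) as [N0 HN0].
  specialize (HN0 (max N0 j) (Nat.le_max_l _ _)). simpl in HN0.
  pose proof (Cmod_coef_pow_le_tail (max N0 j) j r Hr (Nat.le_max_r _ _)).
  apply Rabs_lt_between in HN0. lra.
Qed.

Lemma Cmod_coef_le (j : nat) : Cmod (d j) <= M.
Proof.
  apply (le_of_forall_mul_pow_le _ _ j (Cmod_ge_0 _)). apply Cmod_coef_pow_le.
Qed.

End CauchyEstimate.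

Definition log_partial_sum (N : nat) (r : R) : R := sum_n (fun m => r ^ S m / INR (S m)) N.

Lemma log_partial_sum_le (N : nat) (r : R) : 0 <= r < 1 -> log_partial_sum N r <= - ln (1 - r).
Proof.
  intros Hr.
  set (h := fun x => - ln (1 - x) - log_partial_sum N x).
  set (dh := fun x => / (1 - x) - sum_n (fun m => x ^ m) N).
  assert (Hd : forall x, x < 1 -> is_derive h x (dh x)).
  { intros x Hx. apply (is_derive_minus (fun x => - ln (1 - x)) (log_partial_sum N)).
    - auto_derive; [lra|]. field. lra.
    - apply (is_derive_sum_n (fun m y => y ^ (S m) / INR (S m))). intros k _.
      auto_derive; [auto|].
      change (match k with 0%nat => 1 | S _ => INR k + 1 end) with (INR (S k)).
      field. apply not_0_INR. lia. }
  assert (Hh0 : h 0 = 0).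
  { unfold h, log_partial_sum. rewrite Rminus_0_r, ln_1, (sum_n_ext _ (fun _ => 0)).
    - rewrite sum_n_const. ring.
    - intros m. simpl. unfold Rdiv. ring. }
  destruct (Req_dec r 0) as [->|Hr0]; [unfold h in Hh0; lra|].
  destruct (MVT_gen h 0 r dh) as [x [Hx Hmvt]].
  - intros x Hx. rewrite Rmin_left, Rmax_right in Hx by lra. apply Hd. lra.
  - intros x Hx. rewrite Rmin_left, Rmax_right in Hx by lra.
    apply continuity_pt_filterlim, (ex_derive_continuous h). exists (dh x). apply Hd. lra.
  - rewrite Rmin_left, Rmax_right in Hx by lra.
    assert (Hdh : 0 <= dh x).
    { unfold dh. rewrite sum_n_Reals, tech3 by lra.
      replace (/ (1 - x) - (1 - x ^ S N) / (1 - x)) with (x ^ S N / (1 - x)) by (field; lra).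
      apply Rdiv_le_0_compat; [apply pow_le|]; lra. }
    assert (0 <= dh x * (r - 0)) by (apply Rmult_le_pos; lra).
    unfold h in *. lra.
Qed.

Definition tail_majorant (k : nat) : R := if (3 <=? k)%nat then / (2 * (INR k - 1)) else 0.

Lemma tail_majorant_nonneg (k : nat) : 0 <= tail_majorant k.
Proof.
  unfold tail_majorant. destruct (3 <=? k)%nat eqn:E; [|lra].
  apply Nat.leb_le, le_INR in E. simpl in E. apply Rlt_le, Rinv_0_lt_compat. lra.
Qed.

Lemma sum_n_tail_majorant (N : nat) (r : R) :
  sum_n (fun k => tail_majorant k * r ^ k) (S (S N)) = r / 2 * (log_partial_sum N r - r).
Proof.
  induction N as [|N IH].
  - unfold log_partial_sum. rewrite !sum_n_Reals. simpl. unfold tail_majorant. simpl. field.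
  - rewrite sum_Sn, IH. unfold log_partial_sum. rewrite sum_Sn. fold (log_partial_sum N r).
    unfold tail_majorant. simpl Nat.leb. cbv iota.
    change (r / 2 * (log_partial_sum N r - r) + / (2 * (INR (S (S (S N))) - 1)) * r ^ S (S (S N)) =
      r / 2 * (log_partial_sum N r + r ^ S (S N) / INR (S (S N)) - r)).
    rewrite !S_INR. simpl pow. field. pose proof (pos_INR N). lra.
Qed.

Lemma sum_n_PS_derive_tail_majorant (N : nat) (r : R) :
  r <> 1 ->
  sum_n (fun k => PS_derive tail_majorant k * r ^ k) (S N) =
  / 2 * (r ^ 2 * (1 - r ^ N) / (1 - r)) + / 2 * (log_partial_sum N r - r).
Proof.
  intros Hr1. assert (1 - r <> 0) by lra. unfold PS_derive.
  induction N as [|N IH].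
  - unfold log_partial_sum. rewrite !sum_n_Reals. simpl. unfold tail_majorant. simpl. field. auto.
  - rewrite sum_Sn, IH. unfold log_partial_sum. rewrite sum_Sn. fold (log_partial_sum N r).
    unfold tail_majorant. simpl Nat.leb. cbv iota.
    change (/ 2 * (r ^ 2 * (1 - r ^ N) / (1 - r)) + / 2 * (log_partial_sum N r - r) +
       INR (S (S (S N))) * / (2 * (INR (S (S (S N))) - 1)) * r ^ S (S N) =
       / 2 * (r ^ 2 * (1 - r ^ S N) / (1 - r))
       + / 2 * (log_partial_sum N r + r ^ S (S N) / INR (S (S N)) - r)).
    rewrite !S_INR. simpl pow. field. pose proof (pos_INR N). split; lra.
Qed.

Lemma sum_n_PS_derive2_tail_majorant (N : nat) (r : R) :
  r <> 1 ->
  sum_n (fun k => r * (PS_derive (PS_derive tail_majorant) k * r ^ k)) N =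
  / 2 * (/ (1 - r) ^ 2 - 1 - 2 * r
         - (INR (S (S (S N))) * r ^ S (S N) - INR (S (S N)) * r ^ S (S (S N))) / (1 - r) ^ 2).
Proof.
  intros Hr1. assert (1 - r <> 0) by lra. unfold PS_derive.
  induction N as [|N IH].
  - rewrite sum_O. unfold tail_majorant. simpl. field. auto.
  - rewrite sum_Sn, IH. unfold tail_majorant. simpl Nat.leb. cbv iota.
    change (/ 2 * (/ (1 - r) ^ 2 - 1 - 2 * r
       - (INR (S (S (S N))) * r ^ S (S N) - INR (S (S N)) * r ^ S (S (S N))) / (1 - r) ^ 2) +
      r * (INR (S (S N)) * (INR (S (S (S N))) * / (2 * (INR (S (S (S N))) - 1))) * r ^ S N) =
      / 2 * (/ (1 - r) ^ 2 - 1 - 2 * r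
       - (INR (S (S (S (S N)))) * r ^ S (S (S N)) - INR (S (S (S N))) * r ^ S (S (S (S N))))
         / (1 - r) ^ 2)).
    rewrite !S_INR. simpl pow. field. pose proof (pos_INR N). split; lra.
Qed.

Lemma tail_majorant_sum_le (N : nat) (r : R) :
  0 <= r < 1 ->
  sum_n (fun k => tail_majorant k * r ^ k) N <= - (r / 2) * ln (1 - r) - r ^ 2 / 2.
Proof.
  intros Hr. eapply Rle_trans.
  - apply (sum_n_le_add_nonneg _ N 2). intros k.
    apply Rmult_le_pos; [apply tail_majorant_nonneg|apply pow_le; lra].
  - change (2 + N)%nat with (S (S N)). rewrite sum_n_tail_majorant.
    pose proof (log_partial_sum_le N r Hr).
    replace (- (r / 2) * ln (1 - r) - r ^ 2 / 2) with (r / 2 * (- ln (1 - r) - r)) by field.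
    apply Rmult_le_compat_l; lra.
Qed.

Lemma PS_derive_tail_majorant_sum_le (N : nat) (r : R) :
  0 <= r < 1 ->
  sum_n (fun k => PS_derive tail_majorant k * r ^ k) N
  <= (2 * r ^ 2 - r) / (2 * (1 - r)) - ln (1 - r) / 2.
Proof.
  intros Hr. eapply Rle_trans.
  - apply (sum_n_le_add_nonneg _ N 1). intros k. unfold PS_derive.
    apply Rmult_le_pos; [apply Rmult_le_pos; [apply pos_INR|apply tail_majorant_nonneg]|].
    apply pow_le; lra.
  - change (1 + N)%nat with (S N). rewrite sum_n_PS_derive_tail_majorant by lra.
    pose proof (log_partial_sum_le N r Hr).
    pose proof (pow_le r N (proj1 Hr)).
    assert (r ^ 2 * (1 - r ^ N) / (1 - r) <= r ^ 2 / (1 - r)).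
    { unfold Rdiv. apply Rmult_le_compat_r; [apply Rlt_le, Rinv_0_lt_compat; lra|].
      pose proof (pow2_ge_0 r). nra. }
    replace ((2 * r ^ 2 - r) / (2 * (1 - r)) - ln (1 - r) / 2) with
      (/ 2 * (r ^ 2 / (1 - r)) + / 2 * (- ln (1 - r) - r)) by (field; lra).
    lra.
Qed.

Lemma PS_derive2_tail_majorant_sum_le (N : nat) (r : R) :
  0 <= r < 1 ->
  sum_n (fun k => r * (PS_derive (PS_derive tail_majorant) k * r ^ k)) N
  <= r ^ 2 * (3 - 2 * r) / (2 * (1 - r) ^ 2).
Proof.
  intros Hr. rewrite sum_n_PS_derive2_tail_majorant by lra.
  assert (HQ : 0 <= (INR (S (S (S N))) * r ^ S (S N) - INR (S (S N)) * r ^ S (S (S N)))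
                    / (1 - r) ^ 2).
  { apply Rdiv_le_0_compat; [|apply pow_lt; lra].
    rewrite (S_INR (S (S N))). change (r ^ S (S (S N))) with (r * r ^ S (S N)).
    pose proof (pow_le r (S (S N)) (proj1 Hr)). pose proof (pos_INR (S (S N))).
    set (p := r ^ S (S N)) in *. set (J := INR (S (S N))) in *.
    replace ((J + 1) * p - J * (r * p)) with (p + J * p * (1 - r)) by ring.
    assert (0 <= J * p * (1 - r)) by (apply Rmult_le_pos; [apply Rmult_le_pos|]; lra). lra. }
  replace (r ^ 2 * (3 - 2 * r) / (2 * (1 - r) ^ 2)) with (/ 2 * (/ (1 - r) ^ 2 - 1 - 2 * r))
    by (field; lra).
  lra.
Qed.

Lemma Cmod_tail_coef_le (a : nat -> C) (f phi : C -> C) (n : nat) :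
  (forall z, in_disk z -> is_pseries (f_coef a) z (f z)) ->
  (forall z, in_disk z -> Cmod (phi z) <= 1) ->
  (forall z, in_disk z -> (z * C_derive f z - f z)%C = (RtoC (/ 2) * (z * z * phi z))%C) ->
  (2 <= n)%nat -> forall k, Cmod (tail_coef a n k) <= tail_majorant k.
Proof.
  intros Hf Hphi Heq Hn k.
  assert (Hd : forall k, Cmod ((INR k - 1) * f_coef a k)%C <= / 2).
  { apply (Cmod_coef_le _ (fun w => w * C_derive f w - f w)%C).
    { exact (is_pseries_mul_derive_sub _ _ Hf). }
    intros w Hw. rewrite Heq by exact Hw.
    rewrite !Cmod_mult, Cmod_R, Rabs_pos_eq by lra.
    pose proof (Cmod_ge_0 w). pose proof (Hphi w Hw). unfold in_disk in Hw.
    assert (Cmod w * Cmod w <= 1) by nra.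
    assert (Cmod w * Cmod w * Cmod (phi w) <= 1)
      by (rewrite <- (Rmult_1_r 1); apply Rmult_le_compat; [nra|apply Cmod_ge_0|lra|lra]).
    lra. }
  unfold tail_coef, tail_majorant. destruct (n <? k)%nat eqn:E.
  - apply Nat.ltb_lt in E. replace (3 <=? k)%nat with true by (symmetry; apply Nat.leb_le; lia).
    specialize (Hd k). destruct k as [|[|k]]; [lia|lia|].
    change (f_coef a (S (S k))) with (a (S (S k))) in Hd.
    assert (HI : 1 <= INR (S (S k)) - 1) by (rewrite !S_INR; pose proof (pos_INR k); lra).
    rewrite Cmod_mult, <- RtoC_minus, Cmod_R, Rabs_pos_eq in Hd by lra.
    rewrite Rinv_mult. apply (Rmult_le_reg_l (INR (S (S k)) - 1)); [lra|].
    rewrite <- Rmult_assoc, (Rmult_comm _ (/ 2)), Rmult_assoc, Rinv_r, Rmult_1_r by lra. exact Hd.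
  - rewrite Cmod_0. apply tail_majorant_nonneg.
Qed.

Theorem lemma1p4 (a : nat -> C) (f phi : C -> C) :
  (* f(z) = z + sum_{k>=2} a_k z^k on the unit disk (series converging there) *)
  (forall z : C, in_disk z ->
     @is_pseries C_AbsRing C_NormedModule (f_coef a) z (f z)) ->
  (* phi analytic in the disk with |phi| <= 1 *)
  holo_disk phi ->
  (forall z : C, in_disk z -> (Cmod (phi z) <= 1)%R) ->
  (* z f'(z) - f(z) = (1/2) z^2 phi(z) on the disk *)
  (forall z : C, in_disk z ->
     Cminus (Cmult z (C_derive f z)) (f z) =
     Cmult (RtoC (/ 2)) (Cmult (Cmult z z) (phi z))) ->
  forall (n : nat) (rho : C -> C),
    (2 <= n)%nat ->
    (* rho = rho_n(.; f) = sum_{k>=n+1} a_k z^k on the disk *)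
    (forall z : C, in_disk z ->
       @is_pseries C_AbsRing C_NormedModule (tail_coef a n) z (rho z)) ->
    forall z : C, in_disk z ->
      let r := Cmod z in
      (Cmod (rho z) <= - (r / 2) * ln (1 - r) - r ^ 2 / 2)%R /\
      (Cmod (C_derive rho z) <= (2 * r ^ 2 - r) / (2 * (1 - r)) - ln (1 - r) / 2)%R /\
      (Cmod (Cmult z (C_derive (C_derive rho) z))
         <= r ^ 2 * (3 - 2 * r) / (2 * (1 - r) ^ 2))%R.
Proof.
  intros Hf _ Hphi Heq n rho Hn Hrho z Hz r.
  pose proof (Cmod_tail_coef_le a f phi n Hf Hphi Heq Hn) as Hcoef.
  pose proof (Cmod_PS_derive_C_le _ _ Hcoef) as Hcoef'.
  pose proof (Cmod_PS_derive_C_le _ _ Hcoef') as Hcoef''.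
  pose proof (is_pseries_C_derive _ _ Hrho) as Hrho'.
  pose proof (is_pseries_C_derive _ _ Hrho') as Hrho''.
  assert (Hr : 0 <= r < 1) by (split; [apply Cmod_ge_0|exact Hz]).
  split; [|split].
  - apply (Cmod_pseries_le _ _ _ _ _ (Hrho z Hz) Hcoef).
    intros N. now apply tail_majorant_sum_le.
  - apply (Cmod_pseries_le _ _ _ _ _ (Hrho' z Hz) Hcoef').
    intros N. now apply PS_derive_tail_majorant_sum_le.
  - apply (Cmod_mul_pseries_le _ _ _ _ _ (Hrho'' z Hz) Hcoef'').
    intros N. now apply PS_derive2_tail_majorant_sum_le.
Qed.
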